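(* Consider a power network whose graph $(\mathcal{V},\mathcal{E})$, $\mathcal{V}=\{1,\dots,n\}$, is a tree, with fixed voltage magnitudes $|V_i|=\overline{V}_i>0$ at every bus and, for every line $(i,k)\in\mathcal{E}$, a local angle constraint $\underline{\theta}_{ik}\le\theta_{ik}\le\overline{\theta}_{ik}$ with $\underline{\theta}_{ik}\in[-\pi,0]$, $\overline{\theta}_{ik}\in[0,\pi]$ (and no other constraints). Let $\mathcal{F}=\prod_{(i,k)\in\mathcal{E}}\mathcal{F}_{ik}$ be the flow region and $\mathcal{P}=\mathbf{A}\mathcal{F}$ the injection region. Then $\mathcal{O}(\mathcal{P})=\mathcal{O}(\mathrm{conv}(\mathcal{P}))$.
   Context: Each line $(i,k)\in\mathcal{E}$ has admittance $y_{ik}=g_{ik}-jb_{ik}$ with $g_{ik},b_{ik}\ge0$. For a line $(i,k)$ and angle difference $\theta_{ik}=\theta_i-\theta_k$ of the bus voltage phases, the flows are $P_{ik}=\overline{V}_i^2 g_{ik}+\overline{V}_i\overline{V}_k b_{ik}\sin\theta_{ik}-\overline{V}_i\overline{V}_k g_{ik}\cos\theta_{ik}$ and $P_{ki}=\overline{V}_k^2 g_{ik}-\overline{V}_i\overline{V}_k b_{ik}\sin\theta_{ik}-\overline{V}_i\overline{V}_k g_{ik}\cos\theta_{ik}$. The two-bus flow region $\mathcal{F}_{ik}\subset\mathbb{R}^2$ is the set of pairs $(P_{ik},P_{ki})$ obtained as $\theta_{ik}$ ranges over $[\underline{\theta}_{ik},\overline{\theta}_{ik}]$; $\mathcal{F}\subset\mathbb{R}^{2|\mathcal{E}|}$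 is the product of these sets (one coordinate per ordered pair $(i,k)$ and $(k,i)$). $\mathbf{A}$ is the $n\times 2|\mathcal{E}|$ matrix with $A(i,(k,l))=1$ if $i=k$ and $0$ otherwise, so that $(\mathbf{A}\mathbf{f})_i=P_i=\sum_{k\sim i}P_{ik}$ is the net real power injection at bus $i$. For $\mathcal{A}\subseteq\mathbb{R}^m$, $\mathcal{O}(\mathcal{A})$ is the set of Pareto-optimal points of $\mathcal{A}$ (points $x\in\mathcal{A}$ such that no $y\in\mathcal{A}$ satisfies $y\le x$ componentwise with strict inequality in some coordinate), and $\mathrm{conv}$ denotes convex hull. *)

From HB Require Import structures.
From mathcomp Require Import all_boot all_order all_algebra.
From mathcomp Require Import all_classical all_reals all_analysis.
Set Implicit Arguments. Unset Strict Implicit. Unset Printing Implicit Defensive.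
Import Order.TTheory GRing.Theory Num.Theory.
Local Open Scope classical_set_scope.
Local Open Scope ring_scope.

Section PowerDefs.
Variable R : realType.

(* A network on buses 'I_n with m lines; line e joins (ends e).1 and (ends e).2,
   i.e. it is the line (i,k) with i = (ends e).1, k = (ends e).2. *)

Definition adj_wo (n m : nat) (ends : 'I_m -> 'I_n * 'I_n) (e0 : option 'I_m)
  : rel 'I_n :=
  fun i j => [exists e : 'I_m, (Some e != e0) &&
     (((ends e).1 == i) && ((ends e).2 == j) ||
      ((ends e).1 == j) && ((ends e).2 == i))].

(* tree: nonempty, connected, and acyclic (every line is a bridge, i.e. its
   endpoints are disconnected once the line is removed; this also rules out
   self-loops and parallel lines) *)
Definition is_tree (n m : nat) (ends : 'I_m -> 'I_n * 'I_n) : Prop :=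
  (0 < n)%N /\
  (forall i j : 'I_n, connect (adj_wo ends None) i j) /\
  (forall e : 'I_m, ~~ connect (adj_wo ends (Some e)) (ends e).1 (ends e).2).

Definition flow_ik (Vi Vk g b th : R) : R :=
  Vi ^+ 2 * g + Vi * Vk * b * sin th - Vi * Vk * g * cos th.
Definition flow_ki (Vi Vk g b th : R) : R :=
  Vk ^+ 2 * g - Vi * Vk * b * sin th - Vi * Vk * g * cos th.

Definition flow_region (Vi Vk g b lo hi : R) : set (R * R) :=
  [set pq | exists th, lo <= th <= hi /\
            pq = (flow_ik Vi Vk g b th, flow_ki Vi Vk g b th)].

(* injection region P = A F, F = product of the F_ik:
   P_i = sum over ordered pairs (i,k) of the flow P_ik *)
Definition injection_region (n m : nat) (ends : 'I_m -> 'I_n * 'I_n)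
  (V : 'I_n -> R) (g b lo hi : 'I_m -> R) : set ('I_n -> R) :=
  [set p | exists f : 'I_m -> R * R,
     (forall e, flow_region (V (ends e).1) (V (ends e).2) (g e) (b e) (lo e) (hi e) (f e)) /\
     p = (fun i => \sum_(e < m | (ends e).1 == i) (f e).1
                 + \sum_(e < m | (ends e).2 == i) (f e).2)].

Definition pareto (n : nat) (A : set ('I_n -> R)) : set ('I_n -> R) :=
  [set x | A x /\ ~ (exists y, A y /\ (forall i, y i <= x i) /\ (exists i, y i < x i))].

Definition conv_hull (n : nat) (A : set ('I_n -> R)) : set ('I_n -> R) :=
  [set x | exists (k : nat) (w : 'I_k -> R) (p : 'I_k -> 'I_n -> R),
     (forall j, 0 <= w j) /\ \sum_(j < k) w j = 1 /\ (forall j, A (p j)) /\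
     x = (fun i => \sum_(j < k) w j * p j i)].

End PowerDefs.

From HB Require Import structures.
From mathcomp Require Import all_boot all_order all_algebra.
From mathcomp Require Import all_classical all_reals all_analysis.
From mathcomp Require Import ring lra.
Import Order.TTheory GRing.Theory Num.Theory.
Local Open Scope classical_set_scope.
Local Open Scope ring_scope.

(* The constraints are local to each line, so the injection region is the
   image of the product of the two-bus regions under the linear, monotone map
   A.  Both flows of a line are affine in (sin θ, cos θ) with a nonpositive
   coefficient in cos θ.  A convex combination of points of the arc
   θ ∈ [lo, hi] has coordinates (s, c) with s² + c² <= 1; the angle asin s
   still lies in [lo, hi] and has the same sine and a cosine >= c.  Hence
   every point of conv(F_ik) is dominated by a point of F_ik, every point of
   conv(P) by a point of P, and dominated sets have the same Pareto points. *)

Lemma pareto_eq_of_dominated (R : realType) (n : nat) (A B : set ('I_n -> R)) :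
  A `<=` B -> (forall y, B y -> exists2 z, A z & forall i, z i <= y i) ->
  pareto A = pareto B.
Proof.
move=> AB domB; apply/seteqP; split => x [Ax minx].
  split; first exact: AB.
  move=> [y [By [yx [i yi]]]]; have [z Az zy] := domB y By.
  apply: minx; exists z; split => //; split => [j|]; first exact: le_trans (yx j).
  by exists i; exact: le_lt_trans (zy i) yi.
have [z Az zx] := domB x Ax.
have -> : x = z.
  apply: funext => i; apply/eqP; rewrite eq_le zx andbT leNgt; apply/negP => zi.
  by apply: minx; exists z; split; [exact: AB | split => //; exists i].
split=> // -[y [Ay [yz [i yi]]]]; apply: minx.
exists y; split; first exact: AB.
split=> [j|]; first exact: le_trans (yz j) (zx j).
by exists i; exact: lt_le_trans yi (zx i).
Qed.

Lemma subset_conv_hull (R : realType) (n : nat) (A : set ('I_n -> R)) :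
  A `<=` conv_hull A.
Proof.
move=> x Ax; exists 1%N, (fun _ => 1), (fun _ => x).
split=> [_|]; first exact: ler01.
split; first by rewrite big_ord1.
by split=> //; apply: funext => i; rewrite big_ord1 mul1r.
Qed.

Section WeightedAverages.
Context {R : realType} {k : nat} {w : 'I_k -> R}.
Hypotheses (w_ge0 : forall j, 0 <= w j) (w_sum1 : \sum_(j < k) w j = 1).

Lemma wavg_affine (x y : 'I_k -> R) (a b c : R) :
  \sum_(j < k) w j * (a + b * x j + c * y j) =
  a + b * \sum_(j < k) w j * x j + c * \sum_(j < k) w j * y j.
Proof.
transitivity (\sum_(j < k) (a * w j + b * (w j * x j) + c * (w j * y j))).
  by apply: eq_bigr => j _; ring.
by rewrite !big_split /= -!mulr_sumr w_sum1 mulr1.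
Qed.

Lemma wavg_le (x : 'I_k -> R) (M : R) :
  (forall j, x j <= M) -> \sum_(j < k) w j * x j <= M.
Proof.
move=> xM; rewrite -[M]mul1r -w_sum1 mulr_suml.
by apply: ler_sum => j _; rewrite ler_wpM2l.
Qed.

Lemma wavg_ge (x : 'I_k -> R) (M : R) :
  (forall j, M <= x j) -> M <= \sum_(j < k) w j * x j.
Proof.
move=> Mx; rewrite -[M]mul1r -w_sum1 mulr_suml.
by apply: ler_sum => j _; rewrite ler_wpM2l.
Qed.

Lemma sqr_wavg_le (x : 'I_k -> R) :
  (\sum_(j < k) w j * x j) ^+ 2 <= \sum_(j < k) w j * x j ^+ 2.
Proof.
set s := \sum_(j < k) w j * x j.
have : 0 <= \sum_(j < k) w j * (s ^+ 2 + (- (2 * s)) * x j + 1 * x j ^+ 2).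
  apply: sumr_ge0 => j _; apply: mulr_ge0 => //.
  by have := sqr_ge0 (x j - s); congr (0 <= _); ring.
by rewrite wavg_affine -/s mul1r; lra.
Qed.

End WeightedAverages.

Section ArcAverages.
Context {R : realType}.

Lemma ler_sin : {in `[(- (pi / 2)), pi / 2] &, {mono (@sin R) : x y / x <= y}}.
Proof. by apply: le_mono_in => x y xI yI; rewrite ltr_sin. Qed.

Lemma sin_le_sin (x y : R) : - pi <= x <= y -> 0 <= y <= pi / 2 -> sin x <= sin y.
Proof.
move=> /andP[pi_x xy] /andP[y0 y_pi2]; have pi0 := pi_gt0 R.
have [x0|x_gt0] := lerP x 0.
  have siny : 0 <= sin y by apply: sin_ge0_pi; apply/andP; split; lra.
  have : 0 <= sin (- x) by apply: sin_ge0_pi; apply/andP; split; lra.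
  by rewrite sinN; lra.
by rewrite ler_sin // in_itv /=; apply/andP; split; lra.
Qed.

Lemma asin_le (s y : R) : -1 <= s <= sin y -> 0 <= y <= pi / 2 -> asin s <= y.
Proof.
move=> /andP[s_ge sy] y_range; have pi0 := pi_gt0 R.
have s1 : -1 <= s <= 1 by rewrite s_ge (le_trans sy (sin_le1 y)).
have asin_range : - (pi / 2) <= asin s <= pi / 2.
  by rewrite asin_geNpi2 ?asin_lepi2.
rewrite -ler_sin ?asinK ?in_itv //=; apply/andP; split; lra.
Qed.

Lemma asin_ge (s y : R) : sin y <= s <= 1 -> - (pi / 2) <= y <= 0 -> y <= asin s.
Proof.
move=> /andP[ys s_le] y_range; have pi0 := pi_gt0 R.
have s1 : -1 <= s <= 1 by rewrite s_le andbT (le_trans (sin_geN1 y) ys).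
have asin_range : - (pi / 2) <= asin s <= pi / 2.
  by rewrite asin_geNpi2 ?asin_lepi2.
rewrite -ler_sin ?asinK ?in_itv //=; apply/andP; split; lra.
Qed.

Section ArcWeights.
Context {lo hi : R} {k : nat} {w : 'I_k -> R} (th : 'I_k -> R).
Hypotheses (lo_range : - pi <= lo <= 0) (hi_range : 0 <= hi <= pi).
Hypotheses (w_ge0 : forall j, 0 <= w j) (w_sum1 : \sum_(j < k) w j = 1).
Hypothesis th_range : forall j, lo <= th j <= hi.

Let s := \sum_(j < k) w j * sin (th j).
Let c := \sum_(j < k) w j * cos (th j).

Lemma wavg_sin_bound : -1 <= s <= 1.
Proof.
by rewrite wavg_ge ?wavg_le // => j; rewrite ?sin_geN1 ?sin_le1.
Qed.

Lemma asin_wavg_sin_mem : lo <= asin s <= hi.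
Proof.
have pi0 := pi_gt0 R; have s1 := wavg_sin_bound.
case/andP: (s1) => s_ge s_le; case/andP: lo_range => lo_ge lo_le.
case/andP: hi_range => hi_ge hi_le; apply/andP; split.
  have [lo_pi2|lo_gt] := lerP lo (- (pi / 2)); first exact: le_trans (asin_geNpi2 s1).
  apply: asin_ge; last by apply/andP; split; lra.
  rewrite s_le andbT; apply: wavg_ge => // j.
  suff : sin (- th j) <= sin (- lo) by rewrite !sinN; lra.
  by case/andP: (th_range j) => lo_th th_hi; apply: sin_le_sin; apply/andP; split; lra.
have [pi2_hi|hi_lt] := lerP (pi / 2) hi; first exact: le_trans (asin_lepi2 s1) _.
apply: asin_le; last by apply/andP; split; lra.
rewrite s_ge /=; apply: wavg_le => // j.
by case/andP: (th_range j) => lo_th th_hi; apply: sin_le_sin; apply/andP; split; lra.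
Qed.

(* By Jensen (s, c) lies in the unit disk, below the circle point of sine s. *)
Lemma wavg_cos_le_cos_asin : c <= cos (asin s).
Proof.
have disk : s ^+ 2 + c ^+ 2 <= 1.
  have := sqr_wavg_le w_ge0 w_sum1 (fun j => sin (th j)).
  have := sqr_wavg_le w_ge0 w_sum1 (fun j => cos (th j)).
  have <- : \sum_(j < k) w j * (0 + 1 * sin (th j) ^+ 2 + 1 * cos (th j) ^+ 2) = 1.
    rewrite -[in RHS]w_sum1; apply: eq_bigr => j _.
    by rewrite add0r !mul1r addrC cos2Dsin2 mulr1.
  by rewrite wavg_affine // -/s -/c; lra.
rewrite cos_asin ?wavg_sin_bound //.
have [c0|c_gt0] := lerP c 0; first exact: le_trans (sqrtr_ge0 _).
rewrite -(ger0_norm (ltW c_gt0)) -sqrtr_sqr ler_sqrt; first lra.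
by have := sqr_ge0 c; lra.
Qed.

End ArcWeights.

Lemma flow_region_wavg_dominated {Vi Vk g b lo hi : R} {k : nat} {w : 'I_k -> R}
    (p : 'I_k -> R * R) :
  0 <= Vi -> 0 <= Vk -> 0 <= g -> - pi <= lo <= 0 -> 0 <= hi <= pi ->
  (forall j, 0 <= w j) -> \sum_(j < k) w j = 1 ->
  (forall j, flow_region Vi Vk g b lo hi (p j)) ->
  exists2 q, flow_region Vi Vk g b lo hi q &
    q.1 <= \sum_(j < k) w j * (p j).1 /\ q.2 <= \sum_(j < k) w j * (p j).2.
Proof.
move=> Vi0 Vk0 g0 lo_range hi_range w0 w1 /choice[th th_p].
have th_range j : lo <= th j <= hi by case: (th_p j).
set t := asin (\sum_(j < k) w j * sin (th j)).
exists (flow_ik Vi Vk g b t, flow_ki Vi Vk g b t).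
  by exists t; split; first exact: asin_wavg_sin_mem.
have avg1 : \sum_(j < k) w j * (p j).1 = \sum_(j < k) w j *
    (Vi ^+ 2 * g + Vi * Vk * b * sin (th j) + - (Vi * Vk * g) * cos (th j)).
  by apply: eq_bigr => j _; rewrite (th_p j).2 /= /flow_ik; congr (_ * _); ring.
have avg2 : \sum_(j < k) w j * (p j).2 = \sum_(j < k) w j *
    (Vk ^+ 2 * g + - (Vi * Vk * b) * sin (th j) + - (Vi * Vk * g) * cos (th j)).
  by apply: eq_bigr => j _; rewrite (th_p j).2 /= /flow_ki; congr (_ * _); ring.
have sin_t : sin t = \sum_(j < k) w j * sin (th j).
  by rewrite asinK // in_itv /= (wavg_sin_bound th w0 w1).
have cos_coef : 0 <= Vi * Vk * g by rewrite !mulr_ge0.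
have := ler_wpM2l cos_coef (wavg_cos_le_cos_asin th w0 w1).
rewrite /= avg1 avg2 !wavg_affine // /flow_ik /flow_ki sin_t.
by split; lra.
Qed.

End ArcAverages.

Section Injections.
Variables (R : realType) (n m : nat) (ends : 'I_m -> 'I_n * 'I_n).

Definition bus_injection (f : 'I_m -> R * R) : 'I_n -> R :=
  fun i => \sum_(e < m | (ends e).1 == i) (f e).1 + \sum_(e < m | (ends e).2 == i) (f e).2.

Lemma bus_injection_le (f f' : 'I_m -> R * R) :
  (forall e, (f e).1 <= (f' e).1 /\ (f e).2 <= (f' e).2) ->
  forall i, bus_injection f i <= bus_injection f' i.
Proof.
by move=> ff' i; apply: lerD; apply: ler_sum => e _; case: (ff' e).
Qed.

Lemma bus_injection_wavg (k : nat) (w : 'I_k -> R) (F : 'I_k -> 'I_m -> R * R) i :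
  \sum_(j < k) w j * bus_injection (F j) i =
  bus_injection (fun e => (\sum_(j < k) w j * (F j e).1,
                           \sum_(j < k) w j * (F j e).2)) i.
Proof.
rewrite /bus_injection /= (exchange_big_dep xpredT) //=.
rewrite [X in _ + X](exchange_big_dep xpredT) //= -big_split /=.
apply: eq_bigr => j _; rewrite mulrDr !mulr_sumr.
by congr (_ + _); apply: eq_bigl => e; rewrite andbT.
Qed.

Lemma conv_injection_region_dominated (V : 'I_n -> R) (g b lo hi : 'I_m -> R) :
  (forall i, 0 < V i) -> (forall e, 0 <= g e) ->
  (forall e, - pi <= lo e <= 0) -> (forall e, 0 <= hi e <= pi) ->
  forall x, conv_hull (injection_region ends V g b lo hi) x ->
  exists2 z, injection_region ends V g b lo hi z & forall i, z i <= x i.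
Proof.
move=> V_gt0 g_ge0 lo_range hi_range x [k [w [p [w0 [w1 [p_in ->]]]]]].
pose F_line e := flow_region (V (ends e).1) (V (ends e).2) (g e) (b e) (lo e) (hi e).
have /choice[F F_p] :
    forall j, exists f, (forall e, F_line e (f e)) /\ p j = bus_injection f := p_in.
have /choice[q q_p] : forall e, exists q, F_line e q /\
    q.1 <= \sum_(j < k) w j * (F j e).1 /\ q.2 <= \sum_(j < k) w j * (F j e).2.
  move=> e; have [q q_in q_le] := flow_region_wavg_dominated (fun j => F j e)
    (ltW (V_gt0 _)) (ltW (V_gt0 _)) (g_ge0 e) (lo_range e) (hi_range e) w0 w1
    (fun j => (F_p j).1 e).
  by exists q.
exists (bus_injection q); first by exists q; split=> // e; case: (q_p e).
move=> i /=; under eq_bigr => j _ do rewrite (F_p j).2.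
by rewrite bus_injection_wavg; apply: bus_injection_le => e; case: (q_p e).
Qed.

End Injections.

Theorem lemma2 (R : realType) (n m : nat) (ends : 'I_m -> 'I_n * 'I_n)
  (V : 'I_n -> R) (g b lo hi : 'I_m -> R) :
  is_tree ends ->
  (forall i, 0 < V i) ->
  (forall e, 0 <= g e) -> (forall e, 0 <= b e) ->
  (forall e, - pi <= lo e <= 0) -> (forall e, 0 <= hi e <= pi) ->
  pareto (injection_region ends V g b lo hi) =
  pareto (conv_hull (injection_region ends V g b lo hi)).
Proof.
move=> _ V_gt0 g_ge0 _ lo_range hi_range.
apply: pareto_eq_of_dominated; first exact: subset_conv_hull.
exact: conv_injection_region_dominated.
Qed.
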